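(* Let $(\Omega,+)$ be a group and $a,b$ subgroups with $a\top b$. Then $a^\top\cap{}^\top b=\{x\subseteq\Omega: a\top x,\ x\top b\}$ is stable under the ternary law $(x,y,z)\mapsto\Gamma(x,a,y,b,z)$ on the power set of $\Omega$, and with the induced law it is a torsor, denoted $U_{ab}$, which is naturally isomorphic (via left graphs $F\mapsto\{\alpha+F(\alpha):\alpha\in a\}$) to the torsor of all bijections $F:a\to b$ with torsor law $(XYZ)=Z\circ Y^{-1}\circ X$.
   Context: $(\Omega,+)$ is a group written additively but not necessarily abelian. For subsets $x,y$, $x\top y$ means every $\omega\in\Omega$ has a unique decomposition $\omega=\xi+\eta$ with $\xi\in x,\eta\in y$. $\Gamma(x,a,y,b,z)=\{\omega:\exists\alpha\in a,\beta\in b:\ \alpha+\omega+\beta\in y,\ \alpha+\omega\in z,\ \omega+\beta\in x\}$. A torsor is a set $G$ with a map $(x,y,z)\mapsto(xyz)$ such that $(xy(zuv))=(x(uzy)v)=((xyz)uv)$ and $(xxy)=y=(yxx)$ for all elements. *)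

(* Subsets of Omega are
   predicates [Omega -> Prop]; equality of subsets is Leibniz equality
   (with functional/propositional extensionality available). *)
From mathcomp Require Import ssreflect ssrfun ssrbool.

Set Implicit Arguments.
Unset Strict Implicit.

Section Defs.
Variable G : Type.

Record is_group (add : G -> G -> G) (opp : G -> G) (zero : G) : Prop := {
  grp_addA : forall x y z, add x (add y z) = add (add x y) z;
  grp_add0g : forall x, add zero x = x;
  grp_addg0 : forall x, add x zero = x;
  grp_addNg : forall x, add (opp x) x = zero;
  grp_addgN : forall x, add x (opp x) = zero }.

Definition is_subgroup (add : G -> G -> G) (opp : G -> G) (zero : G)
  (a : G -> Prop) : Prop :=
  a zero /\ (forall x y, a x -> a y -> a (add x y)) /\
  (forall x, a x -> a (opp x)).

Definition top (add : G -> G -> G) (x y : G -> Prop) : Prop :=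
  forall w, exists! p : G * G, x p.1 /\ y p.2 /\ w = add p.1 p.2.

Definition Gamma (add : G -> G -> G) (x a y b z : G -> Prop) : G -> Prop :=
  fun w => exists al be, a al /\ b be /\
    y (add (add al w) be) /\ z (add al w) /\ x (add w be).

Definition Uab (add : G -> G -> G) (a b : G -> Prop) (x : G -> Prop) : Prop :=
  top add a x /\ top add x b.

Definition left_graph (add : G -> G -> G) (a b : G -> Prop)
  (F : {w | a w} -> {w | b w}) : G -> Prop :=
  fun w => exists al : {w | a w}, w = add (proj1_sig al) (proj1_sig (F al)).

End Defs.

Definition is_torsor (T : Type) (P : T -> Prop) (m : T -> T -> T -> T) : Prop :=
  (forall x y z u v, P x -> P y -> P z -> P u -> P v ->
     m x y (m z u v) = m x (m u z y) v /\ m x (m u z y) v = m (m x y z) u v) /\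
  (forall x y, P x -> P y -> m x x y = y /\ y = m y x x).

From mathcomp Require Import ssreflect ssrfun ssrbool.
From Stdlib Require Import ProofIrrelevance FunctionalExtensionality
  PropExtensionality ClassicalEpsilon.

(* For subgroups [a], [b] with [a ⊤ b], the condition [a ⊤ x] says that [x] meets every
   coset [a + w] in exactly one point, and [x ⊤ b] that it meets every [w + b] in exactly
   one point.  Together these say precisely that [x] is the left graph
   [{α + F α | α ∈ a}] of a bijection [F : a -> b].  Decomposing along [a ⊤ b], an element
   [w = α + β] lies in [Γ(graph X, a, graph Y, b, graph Z)] iff [β = Z (Y⁻¹ (X α))], so [Γ]
   corresponds to the torsor law [Z ∘ Y⁻¹ ∘ X] on bijections, from which stability and the
   torsor identities are transported. *)

Set Implicit Arguments.
Unset Strict Implicit.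

Lemma sig_inj (T : Type) (P : T -> Prop) (u v : {w | P w}) :
  proj1_sig u = proj1_sig v -> u = v.
Proof. by apply: eq_sig_hprop => w; apply: proof_irrelevance. Qed.

Lemma top_uniq (T : Type) (add : T -> T -> T) (x y : T -> Prop) (p1 q1 p2 q2 : T) :
  top add x y -> x p1 -> y q1 -> x p2 -> y q2 -> add p1 q1 = add p2 q2 ->
  p1 = p2 /\ q1 = q2.
Proof.
move=> xy hp1 hq1 hp2 hq2 E.
have [p [_ U]] := xy (add p1 q1).
have E1 := U (p1, q1) (conj hp1 (conj hq1 erefl)).
have E2 := U (p2, q2) (conj hp2 (conj hq2 E)).
by rewrite E1 in E2; case: E2.
Qed.

Lemma top_decomp (T : Type) (add : T -> T -> T) (x y : T -> Prop) (w : T) :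
  top add x y -> exists p q, x p /\ y q /\ w = add p q.
Proof. by move=> /(_ w) [[p q] [[hp [hq E]] _]]; exists p, q. Qed.

Section Group.

Variables (T : Type) (add : T -> T -> T) (opp : T -> T) (zero : T).
Hypothesis group : is_group add opp zero.

Local Notation "x + y" := (add x y).
Local Notation "- x" := (opp x).

Lemma addA x y z : x + (y + z) = x + y + z.
Proof. exact: (grp_addA group). Qed.

Lemma addKg x y : - x + (x + y) = y.
Proof. by rewrite addA (grp_addNg group) (grp_add0g group). Qed.

Lemma addKVg x y : x + (- x + y) = y.
Proof. by rewrite addA (grp_addgN group) (grp_add0g group). Qed.

Lemma addgK x y : y + x + - x = y.
Proof. by rewrite -addA (grp_addgN group) (grp_addg0 group). Qed.

Lemma oppK x : - - x = x.
Proof. by rewrite -[RHS](addKg (- x)) (grp_addNg group) (grp_addg0 group). Qed.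

Variables (a b : T -> Prop).
Hypotheses (a_sub : is_subgroup add opp zero a) (b_sub : is_subgroup add opp zero b).

Lemma top_subgroup_lP (x : T -> Prop) :
  top add a x <->
  (forall w, exists al, a al /\ x (al + w)) /\
  (forall w al al', a al -> a al' -> x (al + w) -> x (al' + w) -> al = al').
Proof.
case: a_sub => _ [_ aN]; split.
- move=> ax; split.
  + move=> w; have [p [q [hp [hq ->]]]] := top_decomp w ax.
    by exists (- p); rewrite addKg; split; first exact: aN.
  + move=> w al al' hal hal' hx hx'.
    have [_ E] := top_uniq ax (aN _ hal) hx (aN _ hal') hx'
      (etrans (addKg _ _) (esym (addKg _ _))).
    by rewrite -(addgK w al) E addgK.
- move=> [ex uniq] w; have [al [hal hx]] := ex w.
  exists (- al, al + w); split; first by split; [exact: aN | split; last rewrite addKg].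
  case=> p q /= [hp [hq Ew]].
  have hpal : - p = al by apply: (uniq w) => //; [exact: aN | rewrite Ew addKg].
  by rewrite -hpal oppK Ew addKg.
Qed.

Lemma top_subgroup_rP (x : T -> Prop) :
  top add x b <->
  (forall w, exists be, b be /\ x (w + be)) /\
  (forall w be be', b be -> b be' -> x (w + be) -> x (w + be') -> be = be').
Proof.
case: b_sub => _ [_ bN]; split.
- move=> xb; split.
  + move=> w; have [p [q [hp [hq ->]]]] := top_decomp w xb.
    by exists (- q); rewrite addgK; split; first exact: bN.
  + move=> w be be' hbe hbe' hx hx'.
    have [E _] := top_uniq xb hx (bN _ hbe) hx' (bN _ hbe')
      (etrans (addgK _ _) (esym (addgK _ _))).
    by rewrite -(addKg w be) E addKg.
- move=> [ex uniq] w; have [be [hbe hx]] := ex w.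
  exists (w + be, - be); split; first by split; [ | split; [exact: bN | rewrite addgK]].
  case=> p q /= [hp [hq Ew]].
  have hqbe : - q = be by apply: (uniq w) => //; [exact: bN | rewrite Ew addgK].
  by rewrite -hqbe oppK Ew addgK.
Qed.

End Group.

Section LeftGraph.

Variables (T : Type) (add : T -> T -> T) (opp : T -> T) (zero : T) (a b : T -> Prop).
Hypotheses (group : is_group add opp zero) (a_sub : is_subgroup add opp zero a)
  (b_sub : is_subgroup add opp zero b) (ab_top : top add a b).

Local Notation "x + y" := (add x y).
Local Notation "- x" := (opp x).
Local Notation A := {w | a w}.
Local Notation B := {w | b w}.

Let aD : forall x y, a x -> a y -> a (x + y) := proj1 (proj2 a_sub).
Let aN : forall x, a x -> a (- x) := proj2 (proj2 a_sub).
Let bD : forall x y, b x -> b y -> b (x + y) := proj1 (proj2 b_sub).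
Let bN : forall x, b x -> b (- x) := proj2 (proj2 b_sub).

Lemma left_graphE (F : A -> B) (al : A) (be : T) : b be ->
  left_graph add F (proj1_sig al + be) <-> proj1_sig (F al) = be.
Proof.
move=> hbe; split; last by move=> <-; exists al.
case=> al' E.
have [E1 E2] := top_uniq ab_top (proj2_sig al) hbe (proj2_sig al') (proj2_sig (F al')) E.
by rewrite (sig_inj E1) E2.
Qed.

Lemma left_graph_inj (F F' : A -> B) : left_graph add F = left_graph add F' -> F = F'.
Proof.
move=> E; apply: functional_extensionality => al; apply: sig_inj; symmetry.
by apply/(left_graphE F' al (proj2_sig (F al))); rewrite -E; exists al.
Qed.

Lemma left_graph_Uab (F : A -> B) : bijective F -> Uab add a b (left_graph add F).
Proof.
case=> Fi FK FiK; split.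
- apply/(top_subgroup_lP group a_sub); split.
  + move=> w; have [p [q [hp [hq ->]]]] := top_decomp w ab_top.
    exists (proj1_sig (Fi (exist b q hq)) + - p); split.
      by apply: aD; [exact: proj2_sig | exact: aN].
    rewrite -(addA group) (addKg group).
    by apply/(left_graphE _ _ hq); rewrite FiK.
  + move=> w al al' hal hal'; have [p [q [hp [hq ->]]]] := top_decomp w ab_top.
    rewrite !(addA group).
    move=> /(left_graphE F (exist a _ (aD hal hp)) hq) E.
    move=> /(left_graphE F (exist a _ (aD hal' hp)) hq) E'.
    have /(can_inj FK) [] : F (exist a _ (aD hal hp)) = F (exist a _ (aD hal' hp)).
      by apply: sig_inj; rewrite E E'.
    by move=> Eal; rewrite -(addgK group p al) Eal (addgK group).
- apply/(top_subgroup_rP group b_sub); split.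
  + move=> w; have [p [q [hp [hq ->]]]] := top_decomp w ab_top.
    exists (- q + proj1_sig (F (exist a p hp))); split.
      by apply: bD; [exact: bN | exact: proj2_sig].
    by rewrite -(addA group) (addKVg group); exists (exist a p hp).
  + move=> w be be' hbe hbe'; have [p [q [hp [hq ->]]]] := top_decomp w ab_top.
    rewrite -!(addA group).
    move=> /(left_graphE F (exist a p hp) (bD hq hbe)) E.
    move=> /(left_graphE F (exist a p hp) (bD hq hbe')) E'.
    by rewrite -(addKg group q be) -E E' (addKg group).
Qed.

Lemma Uab_left_graph (x : T -> Prop) :
  Uab add a b x -> exists F : A -> B, bijective F /\ left_graph add F = x.
Proof.
case=> /(top_subgroup_lP group a_sub) [ax_ex ax_uniq].
move=> /(top_subgroup_rP group b_sub) [xb_ex xb_uniq].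
have [F hF] : exists F : A -> B, forall al, x (proj1_sig al + proj1_sig (F al)).
  apply: (choice (fun (al : A) (be : B) => x (proj1_sig al + proj1_sig be))) => al.
  have [be [hbe hx]] := xb_ex (proj1_sig al).
  by exists (exist b be hbe).
have [Fi hFi] : exists Fi : B -> A, forall be, x (proj1_sig (Fi be) + proj1_sig be).
  apply: (choice (fun (be : B) (al : A) => x (proj1_sig al + proj1_sig be))) => be.
  have [al [hal hx]] := ax_ex (proj1_sig be).
  by exists (exist a al hal).
have FK : cancel F Fi.
  move=> al; apply: sig_inj; apply: (ax_uniq (proj1_sig (F al)));
    [exact: proj2_sig | exact: proj2_sig | exact: hFi | exact: hF].
have FiK : cancel Fi F.
  move=> be; apply: sig_inj; apply: (xb_uniq (proj1_sig (Fi be)));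
    [exact: proj2_sig | exact: proj2_sig | exact: hF | exact: hFi].
exists F; split; first exact: Bijective FK FiK.
apply: functional_extensionality => w; apply: propositional_extensionality.
split; first by case=> al ->.
have [p [q [hp [hq ->]]]] := top_decomp w ab_top => hx.
apply/(left_graphE F (exist a p hp) hq).
by apply: (xb_uniq p) => //; [exact: proj2_sig | exact: (hF (exist a p hp))].
Qed.

Lemma left_graph_comp (X Y Z : A -> B) (Yi : B -> A) : cancel Y Yi -> cancel Yi Y ->
  left_graph add (Z \o Yi \o X) =
    Gamma add (left_graph add X) a (left_graph add Y) b (left_graph add Z).
Proof.
move=> YK YiK; apply: functional_extensionality => w; apply: propositional_extensionality.
split.
- case=> al ->{w} /=; set g := Yi (X al).
  have hgY : proj1_sig (Y g) = proj1_sig (X al) by rewrite /g YiK.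
  exists (proj1_sig g + - proj1_sig al), (- proj1_sig (Z g) + proj1_sig (X al)).
  split; first by apply: aD; [exact: proj2_sig | apply: aN; exact: proj2_sig].
  split; first by apply: bD; [apply: bN; exact: proj2_sig | exact: proj2_sig].
  have -> : proj1_sig g + - proj1_sig al + (proj1_sig al + proj1_sig (Z g))
            = proj1_sig g + proj1_sig (Z g) by rewrite -(addA group) (addKg group).
  split; last split; last by exists al; rewrite -(addA group) (addKVg group).
  + by rewrite -(addA group) (addKVg group) -hgY; exists g.
  + by exists g.
- case=> al [be [hal [hbe [hy [hz hx]]]]].
  have [p [q [hp [hq Ew]]]] := top_decomp w ab_top; subst w.
  set r := exist a _ (aD hal hp).
  move: hx; rewrite -(addA group) => /(left_graphE X (exist a p hp) (bD hq hbe)) hX.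
  move: hz; rewrite (addA group) => /(left_graphE Z r hq) hZ.
  have Ealbe : al + (p + q) + be = al + p + (q + be) by rewrite !(addA group).
  move: hy; rewrite Ealbe => /(left_graphE Y r (bD hq hbe)) hY.
  have hr : r = Yi (X (exist a p hp)).
    by rewrite -[r]YK; congr Yi; apply: sig_inj; rewrite hX hY.
  by exists (exist a p hp); rewrite /= -hr hZ.
Qed.

Lemma Uab_Gamma_closed (x y z : T -> Prop) :
  Uab add a b x -> Uab add a b y -> Uab add a b z -> Uab add a b (Gamma add x a y b z).
Proof.
move=> /Uab_left_graph [X [bX <-]] /Uab_left_graph [Y [[Yi YK YiK] <-]].
move=> /Uab_left_graph [Z [bZ <-]].
rewrite -(left_graph_comp X Z YK YiK); apply: left_graph_Uab.
by apply: bij_comp => //; apply: bij_comp => //; exact: Bijective YiK YK.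
Qed.

Lemma Uab_torsor : is_torsor (Uab add a b) (fun x y z => Gamma add x a y b z).
Proof.
split=> [x y z u v | x y].
- move=> /Uab_left_graph [X [_ <-]] /Uab_left_graph [Y [[Yi YK YiK] <-]].
  move=> /Uab_left_graph [Z [[Zi ZK ZiK] <-]] /Uab_left_graph [U [[Ui UK UiK] <-]].
  move=> /Uab_left_graph [V [_ <-]].
  have YZUK : cancel (Y \o Zi \o U) (Ui \o Z \o Yi) by move=> t /=; rewrite YK ZiK UK.
  have YZUiK : cancel (Ui \o Z \o Yi) (Y \o Zi \o U) by move=> t /=; rewrite UiK ZK YiK.
  rewrite -(left_graph_comp Z V UK UiK) -(left_graph_comp U Y ZK ZiK).
  rewrite -(left_graph_comp X Z YK YiK) -(left_graph_comp X (V \o Ui \o Z) YK YiK).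
  rewrite -(left_graph_comp (Z \o Yi \o X) V UK UiK) -(left_graph_comp X V YZUK YZUiK).
  by split.
- move=> /Uab_left_graph [X [[Xi XK XiK] <-]] /Uab_left_graph [Y [_ <-]].
  rewrite -(left_graph_comp X Y XK XiK) -(left_graph_comp Y X XK XiK).
  have -> : Y \o Xi \o X = Y by apply: functional_extensionality => t /=; rewrite XK.
  have -> : X \o Xi \o Y = Y by apply: functional_extensionality => t /=; rewrite XiK.
  by split.
Qed.

End LeftGraph.

Theorem theorem4p4 (Omega : Type) (add : Omega -> Omega -> Omega)
  (opp : Omega -> Omega) (zero : Omega)
  (a b : Omega -> Prop) :
  is_group add opp zero ->
  is_subgroup add opp zero a -> is_subgroup add opp zero b ->
  top add a b ->
  (forall x y z, Uab add a b x -> Uab add a b y -> Uab add a b z ->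
     Uab add a b (Gamma add x a y b z)) /\
  is_torsor (Uab add a b) (fun x y z => Gamma add x a y b z) /\
  (forall F : {w | a w} -> {w | b w}, bijective F ->
     Uab add a b (left_graph add F)) /\
  (forall F F' : {w | a w} -> {w | b w}, bijective F -> bijective F' ->
     left_graph add F = left_graph add F' -> F = F') /\
  (forall x, Uab add a b x ->
     exists F : {w | a w} -> {w | b w}, bijective F /\ left_graph add F = x) /\
  (forall (X Y Z : {w | a w} -> {w | b w}) (Yi : {w | b w} -> {w | a w}),
     bijective X -> bijective Y -> bijective Z ->
     cancel Y Yi -> cancel Yi Y ->
     left_graph add (Z \o Yi \o X) =
       Gamma add (left_graph add X) a (left_graph add Y) b (left_graph add Z)).
Proof.
move=> group a_sub b_sub ab_top.
split; first exact: (Uab_Gamma_closed group a_sub b_sub ab_top).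
split; first exact: (Uab_torsor group a_sub b_sub ab_top).
split; first exact: (left_graph_Uab group a_sub b_sub ab_top).
split; first by move=> F F' _ _; exact: (left_graph_inj ab_top).
split; first exact: (Uab_left_graph group a_sub b_sub ab_top).
by move=> X Y Z Yi _ _ _; exact: (left_graph_comp group a_sub b_sub ab_top).
Qed.
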